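(* Assume $\lfloor (M_1+\dots+M_n)/p\rfloor=n-1$ (ample reduction). For $l=1,\dots,n-1$ let $i(l)$ be the unique positive integer with $0\le\sum_{j=i(l)}^nM_j-lp<M_{i(l)}$. Then $i(l)=n-l$ for $l=1,\dots,n-1$.
   Context: $p,q$ are primes, $n$ a positive integer with $p>n\ge2$, $p>q$; $m_1,\dots,m_n$ are positive integers $<q$, and $M_i$ is the least positive integer with $M_i\equiv -m_iq^{-1}\pmod p$ (so $1\le M_i\le p-1$). *)

From mathcomp Require Import all_boot all_order all_algebra.
Set Implicit Arguments. Unset Strict Implicit. Unset Printing Implicit Defensive.
Import GRing.Theory.
Local Open Scope ring_scope.

(* [is_M p q m M] : M is the least positive integer with
   M = - m * q^{-1} (mod p), the congruence being stated in the prime field 'F_p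
   (where q%:R is invertible since p is a prime with q < p). *)
Definition is_M (p q m M : nat) : Prop :=
  [/\ (0 < M)%N,
      (M%:R : 'F_p) = - (m%:R) / (q%:R)
    & forall k : nat, (0 < k)%N -> (k%:R : 'F_p) = - (m%:R) / (q%:R) -> (M <= k)%N].

From mathcomp Require Import all_boot all_order all_algebra.
From mathcomp Require Import zify.

Set Implicit Arguments.
Unset Strict Implicit.
Unset Printing Implicit Defensive.

Import GRing.Theory.

(* Each M_j is a nonzero residue, so 1 <= M_j <= p - 1.  Put T_i = M_i + ... + M_n.
   The tail T_(n-l+1) has l terms, hence T_(n-l+1) < l p; the head M_1 + ... + M_(n-l-1)
   has n-l-1 terms, so the ample-reduction bound M_1 + ... + M_n >= (n-1) p forces
   T_(n-l) >= l p.  As T is nonincreasing, n - l is the only index where T crosses l p,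
   and the condition l p <= T_i < l p + M_i says exactly that T crosses l p at i. *)

Lemma Fp_nat_eq0 (p k : nat) : prime p -> ((k%:R : 'F_p) == 0)%R = (p %| k).
Proof. by move=> p_pr; rewrite (dvdn_pcharf (pchar_Fp p_pr)). Qed.

Lemma Fp_least_pos_rep_lt (p M : nat) (x : 'F_p) : prime p -> x != 0%R ->
  (M%:R = x)%R -> (forall k, 0 < k -> (k%:R = x)%R -> M <= k) -> M < p.
Proof.
move=> p_pr x_neq0 Mx M_min.
have Mp_x : ((M %% p)%:R = x)%R by rewrite Fp_nat_mod.
have Mp_gt0 : 0 < M %% p.
  by rewrite lt0n; apply: contra x_neq0 => /eqP Mp0; rewrite -Mp_x Mp0.
exact: leq_ltn_trans (M_min _ Mp_gt0 Mp_x) (ltn_pmod _ (prime_gt0 p_pr)).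
Qed.

Lemma is_M_bounds (p q m M : nat) : prime p -> q < p -> 0 < m < q ->
  is_M p q m M -> 0 < M < p.
Proof.
move=> p_pr qp /andP[m_gt0 mq] [M_gt0 MF M_min]; rewrite M_gt0 /=.
apply: (Fp_least_pos_rep_lt p_pr _ MF M_min).
have q_gt0 := ltn_trans m_gt0 mq.
by rewrite mulf_neq0 ?oppr_eq0 ?invr_eq0 ?(Fp_nat_eq0 _ p_pr) ?gtnNdvd //;
  apply: ltn_trans qp.
Qed.

Definition tail_sum (F : nat -> nat) (n i : nat) : nat := \sum_(i <= j < n.+1) F j.

Section TailSums.

Variables (F : nat -> nat) (n : nat).

Lemma tail_sumS i : i <= n -> tail_sum F n i = F i + tail_sum F n i.+1.
Proof. by move=> le_in; rewrite /tail_sum big_ltn. Qed.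

Lemma leq_tail_sum i k : i <= k -> tail_sum F n k <= tail_sum F n i.
Proof.
move=> le_ik; rewrite /tail_sum; case: (leqP k n.+1) => [le_kn|lt_nk].
  by rewrite (big_cat_nat le_ik le_kn) leq_addl.
by rewrite big_geq // ltnW.
Qed.

Lemma tail_sum_crossing_uniq k c i : k <= n ->
  tail_sum F n k.+1 < c <= tail_sum F n k ->
  (c <= tail_sum F n i < c + F i) <-> i = k.
Proof.
move=> le_kn /andP[lt_c le_c]; split; last first.
  by move->; rewrite le_c tail_sumS // addnC ltn_add2r.
case/andP=> le_ci lt_ic; case: (ltngtP i k) => // [lt_ik|lt_ki].
- have le_in : i <= n by apply: leq_trans (ltnW lt_ik) le_kn.
  by have := leq_tail_sum lt_ik; rewrite tail_sumS // in lt_ic; lia.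
- by have := leq_tail_sum lt_ki; lia.
Qed.

End TailSums.

Lemma leq_sum_nat_const (F : nat -> nat) a b K :
  (forall j, a <= j < b -> F j <= K) -> \sum_(a <= j < b) F j <= (b - a) * K.
Proof.
move=> F_le; rewrite -sum_nat_const_nat big_nat_cond [leqRHS]big_nat_cond.
by apply: leq_sum => j /andP[/F_le].
Qed.

Section BoundedTailSums.

Variables (F : nat -> nat) (n p : nat).
Hypothesis F_lt : forall j, 0 < j <= n -> F j < p.

Lemma tail_sum_lt l : 0 < l <= n -> tail_sum F n (n.+1 - l) < l * p.
Proof.
move=> /andP[l_gt0 le_ln].
have p_gt0 : 0 < p by apply: leq_ltn_trans (leq0n (F n)) (F_lt _); lia.
have F_le j : n.+1 - l <= j < n.+1 -> F j <= p.-1.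
  by move=> j_range; rewrite -ltnS prednK //; apply: F_lt; lia.
apply: leq_ltn_trans (leq_sum_nat_const F_le) _.
rewrite subKn; last lia.
by rewrite ltn_pmul2l // ltn_predL.
Qed.

Lemma tail_sum_ge l : l < n -> n.-1 * p <= \sum_(1 <= j < n.+1) F j ->
  l * p <= tail_sum F n (n - l).
Proof.
move=> lt_ln total_ge.
have total_split : \sum_(1 <= j < n.+1) F j =
    \sum_(1 <= j < n - l) F j + tail_sum F n (n - l).
  by rewrite /tail_sum -big_cat_nat //; lia.
have head_le : \sum_(1 <= j < n - l) F j <= (n - l - 1) * p.
  by apply: leq_sum_nat_const => j j_range; apply: ltnW; apply: F_lt; lia.
have total_mul : n.-1 * p = l * p + (n - l - 1) * p.
  by rewrite -mulnDl; congr (_ * _); lia.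
lia.
Qed.

End BoundedTailSums.

Theorem corollary6p4 (p q n : nat) (m M : nat -> nat) :
  prime p -> prime q -> 0 < n -> 2 <= n -> n < p -> q < p ->
  (forall j, 1 <= j <= n -> 0 < m j < q) ->
  (forall j, 1 <= j <= n -> is_M p q (m j) (M j)) ->
  (\sum_(1 <= j < n.+1) M j) %/ p = n.-1 ->
  forall l, 1 <= l <= n.-1 ->
    forall i, 0 < i ->
      ((l * p <= \sum_(i <= j < n.+1) M j < l * p + M i) <-> i = n - l).
Proof.
move=> p_pr _ _ _ _ qp m_range M_def ample l /andP[l_gt0 l_lt] i _.
have M_lt j : 0 < j <= n -> M j < p.
  move=> j_range.
  by case/andP: (is_M_bounds p_pr qp (m_range j j_range) (M_def j j_range)).
have lt_ln : l < n by lia.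
have cross_hi : tail_sum M n (n - l).+1 < l * p.
  by rewrite -subSn ?tail_sum_lt ?l_gt0 //; lia.
have cross_lo : l * p <= tail_sum M n (n - l).
  by apply: tail_sum_ge => //; rewrite -ample leq_trunc_div.
by apply: tail_sum_crossing_uniq; rewrite ?leq_subr ?cross_hi.
Qed.
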